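(* Let $N\ge3$, let $G_{2N}=K_2\otimes K_N$, and let $k=N-1$ be the common degree of its vertices. For vertices $i,j$ let $d_{ij}$ be their distance, and let $M^m_{ij}$ be the number of walks of length $m$ from $i$ to $j$ in $G_{2N}$. Then: - if $i\neq j$, $d_{ij}=1$ and $m$ is odd, then $M^m_{ij}=\frac{k^{m}+1}{k+1}$; - if $i\neq j$, $d_{ij}=2$ and $m\ge 2$ is even, then $M^m_{ij}=\frac{k^{m}-1}{k+1}$; - if $i=j$ and $m$ is odd, then $M^m_{ii}=0$; - if $i=j$ and $m\ge2$ is even, then $M^m_{ii}=\frac{k^{m}-1}{k+1}+1$.
   Context: $K_2\otimes K_N$ is the Kronecker (tensor) product of $K_2$ and $K_N$. Its vertex set is $\{1,2\}\times\{1,\dots,N\}$, with $(a,u)\sim(b,v)$ if and only if $a\neq b$ and $u\neq v$. *)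

From mathcomp Require Import all_boot all_order all_algebra.
Set Implicit Arguments. Unset Strict Implicit. Unset Printing Implicit Defensive.

(* Vertices of K_2 (x) K_N : {1,2} x {1..N}, encoded as bool * 'I_N. *)
Definition vtx (N : nat) : finType := (bool * 'I_N)%type.

Definition kadj (N : nat) : rel (vtx N) :=
  fun x y => (x.1 != y.1) && (x.2 != y.2).

(* Number of walks of length m from i to j: sequences of m steps
   i = x0 ~ x1 ~ ... ~ xm = j, encoded by the tuple (x1,...,xm). *)
Definition walks (N m : nat) (i j : vtx N) : nat :=
  #|[set t : m.-tuple (vtx N) | path (@kadj N) i t && (last i t == j)]|.

Definition is_dist (N : nat) (i j : vtx N) (d : nat) : Prop :=
  (0 < walks d i j)%N /\ forall m, (m < d)%N -> walks m i j = 0%N.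

(* Walks in a tensor product of graphs are pairs of walks of the same length in
   the factors, so the walk count of K_2 (x) K_N is the product of the walk
   counts of K_2 and K_N.  In K_2 a walk of length m joins a to b exactly when
   m and [a != b] have the same parity.  In K_n the walk counts satisfy
   n W_m(u,v) = (n-1)^m - (-1)^m + [u = v] n (-1)^m, by induction on m: every
   column of W_m sums to (n-1)^m, and W_(m+1)(u,v) is that column sum minus
   W_m(u,v). *)
From mathcomp Require Import all_boot all_order all_algebra ring.
Set Implicit Arguments. Unset Strict Implicit. Unset Printing Implicit Defensive.
Import GRing.Theory Num.Theory.
Local Open Scope ring_scope.

Definition nwalks {T : finType} (e : rel T) (m : nat) (x y : T) : nat :=
  #|[set t : m.-tuple T | path e x t && (last x t == y)]|.

Definition complete_rel {T : eqType} : rel T := fun x y => x != y.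

Definition tensor_rel {S T : Type} (e1 : rel S) (e2 : rel T) : rel (S * T) :=
  fun x y => e1 x.1 y.1 && e2 x.2 y.2.

Section Walks.
Variables (T : finType) (e : rel T).

Lemma nwalksE m x y :
  nwalks e m x y = (\sum_(t : m.-tuple T) (path e x t && (last x t == y)))%N.
Proof.
by rewrite /nwalks -sum1dep_card big_mkcond /=; apply: eq_bigr => t _; case: ifP.
Qed.

Lemma nwalks0 x y : nwalks e 0 x y = (x == y).
Proof.
rewrite nwalksE (big_pred1 [tuple]) // => t.
by case: t => [[|? ?] ?] //=; apply/esym/eqP/val_inj.
Qed.

Lemma nwalksS m x y : nwalks e m.+1 x y = (\sum_(z | e x z) nwalks e m z y)%N.
Proof.
rewrite nwalksE.
pose cons_tuple (p : T * m.-tuple T) : m.+1.-tuple T := [tuple of p.1 :: p.2].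
pose uncons (t : m.+1.-tuple T) := (thead t, behead_tuple t).
have consK : cancel cons_tuple uncons by case=> z t; congr pair; apply: val_inj.
have unconsK : cancel uncons cons_tuple by move=> t; apply: val_inj; case/tupleP: t.
rewrite (reindex cons_tuple); last by exists uncons.
rewrite -(pair_bigA _ (fun z (t : m.-tuple T) => path e x (z :: t) && (last x (z :: t) == y) : nat)).
rewrite [RHS]big_mkcond /=; apply: eq_bigr => z _.
case: ifP => [_|nxz]; first by rewrite nwalksE.
by rewrite big1 // => t _; rewrite nxz.
Qed.

Lemma nwalks1 x y : nwalks e 1 x y = e x y.
Proof.
rewrite nwalksS (eq_bigr (fun z => nat_of_bool (z == y))) => [|z _]; last by rewrite nwalks0.
rewrite big_mkcond (bigD1 y) //= eqxx big1 ?addn0 => [|z /negbTE->]; last by case: ifP.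
by case: (e x y).
Qed.

End Walks.

Lemma nwalks_tensor (S T : finType) (e1 : rel S) (e2 : rel T) m x y :
  nwalks (tensor_rel e1 e2) m x y = (nwalks e1 m x.1 y.1 * nwalks e2 m x.2 y.2)%N.
Proof.
elim: m x => [|m IH] x.
  by rewrite !nwalks0 mulnb; case: x y => [a u] [b v]; rewrite xpair_eqE.
rewrite !nwalksS (eq_bigr _ (fun z _ => IH z)) /tensor_rel.
rewrite -(pair_big_dep (e1 x.1) (fun _ => e2 x.2)
  (fun a u => nwalks e1 m a y.1 * nwalks e2 m u y.2)%N) /=.
by rewrite big_distrl; apply: eq_bigr => a _; rewrite big_distrr.
Qed.

Lemma nwalks_complete_bool m (a b : bool) :
  nwalks (@complete_rel bool) m a b = (odd m == (a != b)).
Proof.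
elim: m a => [|m IH] a; first by rewrite nwalks0; case: a; case: b.
rewrite nwalksS (big_pred1 (~~ a)) => [|c]; last by case: a; case: c.
by rewrite IH {IH} /=; case: a; case: b; case: (odd m).
Qed.

Section CompleteGraph.
Variables (R : comPzRingType) (T : finType).
Let n : R := #|T|%:R.
Let W m x y : R := (nwalks (@complete_rel T) m x y)%:R.

Lemma nwalks_complete m x y :
  n * W m x y = (n - 1) ^+ m - (-1) ^+ m + (x == y)%:R * n * (-1) ^+ m.
Proof.
elim: m x => [|m IH] x; first by rewrite /W nwalks0 !expr0; ring.
have col_sum : \sum_z n * W m z y = n * (n - 1) ^+ m.
  rewrite (eq_bigr _ (fun z _ => IH z)) !big_split /= !sumr_const -!mulr_suml.
  rewrite (bigD1 y) //= eqxx big1 => [|z /negbTE-> //].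
  by rewrite -[(n - 1) ^+ m *+ _]mulr_natr -[- _ *+ _]mulr_natr -/n addr0 mul1r; ring.
have -> : n * W m.+1 x y = \sum_z n * W m z y - n * W m x y.
  rewrite /W nwalksS natr_sum mulr_sumr [X in _ = X - _](bigD1 x) //= addrAC subrr add0r.
  by apply: eq_bigl => z; rewrite /complete_rel eq_sym.
by rewrite col_sum IH !exprS; ring.
Qed.

End CompleteGraph.

Lemma walks_tensor N m (i j : vtx N) :
  walks m i j = (nwalks (@complete_rel bool) m i.1 j.1
                 * nwalks (@complete_rel 'I_N) m i.2 j.2)%N.
Proof. exact: (@nwalks_tensor _ _ (@complete_rel bool) (@complete_rel 'I_N)). Qed.

Lemma nwalks_complete_ord N m (u v : 'I_N) : (0 < N)%N ->
  (nwalks (@complete_rel 'I_N) m u v)%:R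
  = (((N - 1) ^ m)%:R - (-1) ^+ m + (u == v)%:R * N%:R * (-1) ^+ m) / N%:R :> rat.
Proof.
move=> N_gt0; have N0 : N%:R != 0 :> rat by rewrite pnatr_eq0 -lt0n.
have := nwalks_complete rat m u v; rewrite card_ord natrX natrB // => <-.
by rewrite [RHS]mulrC mulKf.
Qed.

Theorem lemma7 (N : nat) (hN : (3 <= N)%N) (i j : vtx N) (m : nat) :
  let k := (N - 1)%N in
  [/\ (i != j -> is_dist i j 1 -> odd m ->
        (walks m i j)%:R = ((k ^ m + 1)%N%:R / (k + 1)%N%:R : rat)),
      (i != j -> is_dist i j 2 -> (2 <= m)%N -> ~~ odd m ->
        (walks m i j)%:R = ((k ^ m - 1)%N%:R / (k + 1)%N%:R : rat)),
      (i = j -> odd m -> walks m i i = 0%N) &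
      (i = j -> (2 <= m)%N -> ~~ odd m ->
        (walks m i i)%:R = ((k ^ m - 1)%N%:R / (k + 1)%N%:R + 1 : rat))].
Proof.
move=> k; have N_gt0 : (0 < N)%N by apply: leq_trans hN.
have kN : (k + 1)%N = N by rewrite subnK.
have km_gt0 : (0 < k ^ m)%N by rewrite expn_gt0 subn_gt0 (ltnW hN).
have sgn : (-1) ^+ m = (-1) ^+ odd m :> rat by rewrite signr_odd.
case: i j => [a u] [b v]; rewrite kN; split.
- move=> _ [adj _] m_odd; move: adj.
  rewrite walks_tensor !nwalks1 muln_gt0 !lt0b /complete_rel /= => /andP[ab uv].
  rewrite walks_tensor nwalks_complete_bool /= ab m_odd mul1n.
  by rewrite nwalks_complete_ord // (negbTE uv) sgn m_odd mul0r addr0 opprK natrD.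
- move=> neq [walk2 _] _ m_even; move: walk2.
  rewrite walks_tensor nwalks_complete_bool muln_gt0 lt0b /=.
  case/andP=> /eqP/esym/negbFE/eqP ab _; subst b.
  have uv : u != v by apply: contraNneq neq => ->.
  rewrite walks_tensor nwalks_complete_bool /= eqxx (negbTE m_even) mul1n.
  by rewrite nwalks_complete_ord // (negbTE uv) sgn (negbTE m_even) mul0r addr0 natrB.
- by move=> _ m_odd; rewrite walks_tensor nwalks_complete_bool /= eqxx m_odd.
- move=> _ _ m_even; rewrite walks_tensor nwalks_complete_bool /= eqxx (negbTE m_even).
  have N0 : N%:R != 0 :> rat by rewrite pnatr_eq0 -lt0n.
  rewrite mul1n nwalks_complete_ord // sgn (negbTE m_even) eqxx natrB //.
  by rewrite mul1r; field.
Qed.
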